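(* Let $G$ be a graph and $(v_1,\dots,v_k)$ a list of (not necessarily distinct) vertices of $G$. Let $G_{m_1,\dots,m_k}$ be the graph obtained by attaching, for each $i$, one endvertex of a new $m_i$-vertex path to $v_i$ by an edge (so $G_{m_1,\dots,m_k}$ has $m_1+\dots+m_k$ more vertices than $G$), and let $R_{m_1,\dots,m_k}(z)$ be its reciprocal polynomial. Then there are integer polynomials $P_{(\epsilon_1,\dots,\epsilon_k)}(z)$, $\epsilon_i\in\{0,1\}$, depending on $G$ and $(v_1,\dots,v_k)$ but not on $m_1,\dots,m_k$, such that whenever all $m_i\ge2$, $$(y^2-1)^kR_{m_1,\dots,m_k}(z)=\sum_{\epsilon_1,\dots,\epsilon_k\in\{0,1\}}y^{2\sum_i\epsilon_im_i}P_{(\epsilon_1,\dots,\epsilon_k)}(z).$$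
   Context: Graphs are finite simple graphs; $\chi_G$ is the characteristic polynomial of the adjacency matrix of an $n$-vertex graph $G$. The reciprocal polynomial is $R_G(z)=z^n\chi_G(z+1/z)$ if $G$ is nonbipartite and $R_G(z)=z^{n/2}\chi_G(\sqrt z+1/\sqrt z)$ if $G$ is bipartite. Here $y=\sqrt z$ if the graphs are bipartite, and $y=z$ otherwise. *)

From HB Require Import structures.
From mathcomp Require Import all_boot all_order all_algebra.
Set Implicit Arguments. Unset Strict Implicit. Unset Printing Implicit Defensive.
Import Order.TTheory GRing.Theory Num.Theory.
Local Open Scope ring_scope.

(* A finite simple graph is a symmetric irreflexive relation on a finType. *)

Definition adjmx (V : finType) (r : rel V) : 'M[int]_#|V| :=
  \matrix_(a, b) (r (enum_val a) (enum_val b))%:R.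

Definition charpoly_graph (V : finType) (r : rel V) : {poly int} :=
  char_poly (adjmx r).

Definition bipartite (V : finType) (r : rel V) : bool :=
  [exists f : {ffun V -> bool}, [forall x, [forall y, r x y ==> (f x != f y)]]].

(* Q(y) = y^n chi(y + 1/y) written out as a polynomial:
   sum_j c_j y^(n-j) (y^2+1)^j, where chi = sum_j c_j x^j, n = #|V|. *)
Definition recip_aux (V : finType) (r : rel V) : {poly int} :=
  let chi := charpoly_graph r in
  \sum_(j < size chi) chi`_j *: ('X^(#|V| - j) * ('X^2 + 1) ^+ j).

(* Reciprocal polynomial R_G(z):
   nonbipartite: R_G(z) = z^n chi(z + 1/z) = Q(z);
   bipartite:    R_G(z) = z^(n/2) chi(sqrt z + 1/sqrt z), i.e. R_G(y^2) = Q(y)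
                 (Q is even in that case); R_G is the even part of Q in y^2. *)
Definition recip (V : finType) (r : rel V) : {poly int} :=
  let Q := recip_aux r in
  if bipartite r then \poly_(i < size Q) Q`_(2 * i) else Q.

(* Graph G_{m_1..m_k}: vertices of G plus, for each i, a path
   (i,0) - (i,1) - ... - (i, m_i - 1), with (i,0) joined to v_i. *)
Definition ext_vert (T : finType) (k : nat) (m : 'I_k -> nat) : finType :=
  (T + {i : 'I_k & 'I_(m i)})%type.

Definition ext_rel (T : finType) (e : rel T) (k : nat) (v : 'I_k -> T)
    (m : 'I_k -> nat) : rel (@ext_vert T k m) :=
  fun a b =>
    match a, b with
    | inl x, inl y => e x y
    | inl x, inr p => (x == v (tag p)) && (val (tagged p) == 0%N)
    | inr p, inl x => (x == v (tag p)) && (val (tagged p) == 0%N)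
    | inr p, inr q => (tag p == tag q) &&
        (((val (tagged p)).+1 == val (tagged q)) ||
         ((val (tagged q)).+1 == val (tagged p)))
    end.

From HB Require Import structures.
From mathcomp Require Import all_boot all_order all_algebra fingroup perm.
From mathcomp Require Import zify ring.
From Stdlib Require Import FunctionalExtensionality.
Import Order.TTheory GRing.Theory Num.Theory.
Set Implicit Arguments. Unset Strict Implicit. Unset Printing Implicit Defensive.
Local Open Scope ring_scope.

(* Let u be the end of the i-th path and w its neighbour.  Expanding the determinant
   along the pendant vertex u gives
     chi(G_{.., n+2, ..}) = x chi(G_{.., n+1, ..}) - chi(G_{.., n, ..}),
   so Q_m(y) = y^|G_m| chi_{G_m}(y + 1/y) satisfies, in each m_i, the recurrence
     Q_{n+2} = (1 + y^2) Q_{n+1} - y^2 Q_n,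
   whose characteristic roots are 1 and y^2.  Hence (y^2 - 1)^k Q_m is a combination
   of the y^(2 eps_i m_i), with coefficients read off by interpolating on the cube
   m in {0,1}^k.  For bipartite graphs R_m is the even part of Q_m, and taking even
   parts turns y^2 into z. *)

Lemma prodr_eq0_at (R : comPzSemiRingType) (I : finType) (F : I -> R) i :
  F i = 0 -> \prod_j F j = 0.
Proof. by move=> Fi; rewrite (bigD1 i) //= Fi mul0r. Qed.

Section PermExtension.
Variables (W V : finType) (h : W -> V).
Hypothesis h_inj : injective h.

Local Notation im_h := (h @: [set: W]).

Lemma im_hP x : reflect (exists a, x = h a) (x \in im_h).
Proof. by apply: (iffP imsetP) => [[a _ ->]|[a ->]]; exists a. Qed.

Definition push_fun (s : {perm W}) (x : V) : V :=
  if [pick a | h a == x] is Some a then h (s a) else x.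

Lemma push_funE s a : push_fun s (h a) = h (s a).
Proof. by rewrite /push_fun; case: pickP => [b /eqP/h_inj -> //|/(_ a)]; rewrite eqxx. Qed.

Lemma push_funN s x : x \notin im_h -> push_fun s x = x.
Proof.
move=> x_out; rewrite /push_fun; case: pickP => [a /eqP ha|//].
by case/negP: x_out; apply/im_hP; exists a.
Qed.

Lemma push_funK s : cancel (push_fun s) (push_fun s^-1).
Proof.
move=> x; have [/im_hP[a ->]|x_out] := boolP (x \in im_h).
  by rewrite !push_funE permK.
by rewrite !push_funN.
Qed.

Definition push_perm s : {perm V} := perm (can_inj (push_funK s)).

Lemma push_permE s a : push_perm s (h a) = h (s a).
Proof. by rewrite permE push_funE. Qed.

Lemma push_permN s x : x \notin im_h -> push_perm s x = x.
Proof. by move=> x_out; rewrite permE push_funN. Qed.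

Lemma push_perm_on s : perm_on im_h (push_perm s).
Proof.
apply/subsetP => x; rewrite inE; apply: contraR => x_out.
by rewrite push_permN.
Qed.

Lemma push_perm_inj : injective push_perm.
Proof. by move=> s1 s2 eq_s; apply/permP => a; apply: h_inj; rewrite -!push_permE eq_s. Qed.

Lemma push_perm1 : push_perm 1 = 1%g.
Proof.
apply/permP => x; rewrite perm1; have [/im_hP[a ->]|x_out] := boolP (x \in im_h).
  by rewrite push_permE perm1.
by rewrite push_permN.
Qed.

Lemma push_permM s1 s2 : push_perm (s1 * s2)%g = (push_perm s1 * push_perm s2)%g.
Proof.
apply/permP => x; rewrite permM; have [/im_hP[a ->]|x_out] := boolP (x \in im_h).
  by rewrite !push_permE permM.
by rewrite !push_permN.
Qed.

Lemma push_permT a b : push_perm (tperm a b) = tperm (h a) (h b).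
Proof.
apply/permP => x; have [/im_hP[c ->]|x_out] := boolP (x \in im_h).
  by rewrite push_permE; apply: inj_tperm.
by rewrite push_permN // tpermD //; apply: contraNneq x_out => <-; apply: imset_f.
Qed.

Lemma odd_push_perm s : odd_perm (push_perm s) = odd_perm s.
Proof.
have [ts -> _] := prod_tpermP s; elim: ts => [|t ts IH].
  by rewrite !big_nil push_perm1 !odd_perm1.
by rewrite !big_cons push_permM push_permT !odd_mul_tperm IH (inj_eq h_inj).
Qed.

Lemma perm_on_push_perm s : perm_on im_h s -> exists t, s = push_perm t.
Proof.
move=> s_on.
have s_im a : s (h a) \in im_h by rewrite perm_closed // imset_f.
pose g a := odflt a [pick b | h b == s (h a)].
have gE a : h (g a) = s (h a).
  rewrite /g; case: pickP => [b /eqP //|no_b].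
  by have /im_hP[b sb] := s_im a; move: (no_b b); rewrite sb eqxx.
have g_inj : injective g.
  by move=> a b gab; apply/h_inj/(@perm_inj _ s); rewrite -!gE gab.
exists (perm g_inj); apply/permP => x; have [/im_hP[a ->]|x_out] := boolP (x \in im_h).
  by rewrite push_permE permE gE.
by rewrite push_permN // (out_perm s_on).
Qed.

End PermExtension.

Definition fdet (R : comPzRingType) (V : finType) (M : V -> V -> R) : R :=
  \sum_(s : {perm V}) (-1) ^+ s * \prod_x M x (s x).

Lemma eq_fdet (R : comPzRingType) (V : finType) (M M' : V -> V -> R) :
  M =2 M' -> fdet M = fdet M'.
Proof. by move=> eqM; apply: eq_bigr => s _; under eq_bigr do rewrite eqM. Qed.

Lemma fdet_inj (R : comPzRingType) (W V : finType) (h : W -> V) (M : V -> V -> R) :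
  injective h -> (forall x y, x \notin h @: [set: W] -> M x y = (x == y)%:R) ->
  fdet M = fdet (fun a b => M (h a) (h b)).
Proof.
move=> h_inj M_out; rewrite /fdet (bigID (perm_on (h @: [set: W]))) /=.
rewrite [X in _ + X]big1 ?addr0 => [|s /subsetPn[x]]; last first.
  rewrite inE => s_x x_out.
  by rewrite (@prodr_eq0_at _ _ _ x) ?mulr0 // M_out // eq_sym (negbTE s_x).
rewrite (eq_bigl (mem (push_perm h_inj @: [set: {perm W}]))) => [|s]; last first.
  apply/idP/imsetP => [/(perm_on_push_perm h_inj)[t ->]|[t _ ->]]; first by exists t.
  exact: push_perm_on.
rewrite big_imset /=; last by move=> s t _ _; apply: push_perm_inj.
apply: eq_big => [t|t _]; first by rewrite inE.
rewrite odd_push_perm; congr (_ * _).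
rewrite (bigID (mem (h @: [set: W]))) /= [X in _ * X]big1 ?mulr1 => [|x x_out]; last first.
  by rewrite push_permN // M_out // eqxx.
rewrite big_imset /=; last by move=> a b _ _; apply: h_inj.
by apply: eq_big => [a|a _]; rewrite ?inE ?push_permE.
Qed.

(* Deleting the vertices outside [A]: their rows and columns are replaced by
   those of the identity matrix. *)
Definition fmx_restrict (R : pzSemiRingType) (V : finType) (A : pred V)
    (M : V -> V -> R) (x y : V) : R :=
  if A x && A y then M x y else (x == y)%:R.

Section Pendant.
Variables (R : comPzRingType) (V : finType) (M : V -> V -> R) (u w : V).
Hypotheses (uw : u != w) (Muw : M u w = -1) (Mwu : M w u = -1)
  (Mu : forall x, x != u -> x != w -> M u x = 0 /\ M x u = 0).

Let M1 := fmx_restrict (predC1 u) M.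
Let M2 := fmx_restrict [pred x | (x != u) && (x != w)] M.

Lemma pendant_prod (s : {perm V}) :
  \prod_x M x (s x) =
  M u u * \prod_x M1 x (s x) + \prod_x M2 x (s (tperm u w x)).
Proof.
have wu : w != u by rewrite eq_sym.
have M1u y : M1 u y = (u == y)%:R by rewrite /M1 /fmx_restrict /= eqxx.
have M2u y : M2 u y = (u == y)%:R by rewrite /M2 /fmx_restrict /= eqxx.
have M2w y : M2 w y = (w == y)%:R by rewrite /M2 /fmx_restrict /= eqxx andbF.
have [su|su] := eqVneq (s u) u.
  rewrite [X in _ + X](@prodr_eq0_at _ _ _ w); last by rewrite tpermR su M2w (negbTE wu).
  rewrite addr0 (bigD1 u) //= [in RHS](bigD1 u) //= su M1u eqxx mul1r; congr (_ * _).
  apply: eq_bigr => x xu; have sxu : s x != u by rewrite -su (inj_eq perm_inj).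
  by rewrite /M1 /fmx_restrict /= xu sxu.
have [sw|sw] := eqVneq (s u) w; last first.
  have [Mus _] := Mu su sw.
  rewrite (@prodr_eq0_at _ _ _ u) // (@prodr_eq0_at _ _ (fun x => M1 x (s x)) u).
    by rewrite mulr0 add0r (@prodr_eq0_at _ _ _ w) // tpermR M2w eq_sym (negbTE sw).
  by rewrite M1u eq_sym (negbTE su).
rewrite [X in _ * X](@prodr_eq0_at _ _ _ u) ?mulr0 ?add0r; last first.
  by rewrite M1u sw (negbTE uw).
have [swu|swu] := eqVneq (s w) u; last first.
  pose p := (s^-1)%g u.
  have sp : s p = u by rewrite permKV.
  have pu : p != u by rewrite -(inj_eq (@perm_inj _ s)) sp eq_sym.
  have pw : p != w by rewrite -(inj_eq (@perm_inj _ s)) sp eq_sym.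
  rewrite (@prodr_eq0_at _ _ _ p); last by rewrite sp; have [] := Mu pu pw.
  by rewrite (@prodr_eq0_at _ _ _ u) // tpermL M2u eq_sym (negbTE swu).
rewrite (bigD1 u) //= (bigD1 w) //= sw swu Muw Mwu mulN1r mulNr opprK mul1r.
rewrite [in RHS](bigD1 u) //= [in RHS](bigD1 w) //= tpermL tpermR sw swu.
rewrite M2u M2w !eqxx !mul1r; apply: eq_bigr => x /andP[xu xw].
have sxu : s x != u by rewrite -swu (inj_eq perm_inj).
have sxw : s x != w by rewrite -sw (inj_eq perm_inj).
by rewrite tpermD 1?eq_sym // /M2 /fmx_restrict /= xu xw sxu sxw.
Qed.

Lemma fdet_pendant :
  fdet M = M u u * fdet M1 - fdet M2.
Proof.
rewrite /fdet [X in _ - X](reindex_inj (mulgI (tperm u w))) mulr_sumr -sumrB.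
apply: eq_bigr => s _; rewrite odd_mul_tperm uw addTb signrN.
have -> : \prod_x M2 x ((tperm u w * s)%g x) = \prod_x M2 x (s (tperm u w x)).
  by apply: eq_bigr => x _; rewrite permM.
by rewrite pendant_prod mulrDr mulrCA mulNr opprK.
Qed.
End Pendant.

Section FunWith.
Variables (k : nat) (m : 'I_k -> nat) (i : 'I_k).

Lemma fwith_id : fwith i (m i) m = m :> ('I_k -> nat).
Proof. by apply: functional_extensionality => j; rewrite /=; case: eqP => [->|]. Qed.

Lemma fwith_fwith a b : fwith i b (fwith i a m) = fwith i b m :> ('I_k -> nat).
Proof. by apply: functional_extensionality => j /=; case: eqP. Qed.

Lemma sum_fwith a :
  (\sum_j fwith i a m j = a + \sum_(j | j != i) m j)%N.
Proof.
rewrite (bigD1 i) //= eqxx; congr (_ + _)%N.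
by apply: eq_bigr => j /negbTE /= ->.
Qed.

Lemma prod_fwith (R : comPzSemiRingType) (F : 'I_k -> nat -> R) a :
  \prod_j F j (fwith i a m j) = F i a * \prod_(j | j != i) F j (m j).
Proof.
rewrite (bigD1 i) //= eqxx; congr (_ * _).
by apply: eq_bigr => j /negbTE /= ->.
Qed.
End FunWith.

Section TwoRootRecurrence.
Variables (R : comPzRingType) (t : R) (k : nat).

(* [g] satisfies, in each coordinate, the linear recurrence with
   characteristic polynomial [(X - 1) (X - t)]. *)
Definition rec_1_t (g : ('I_k -> nat) -> R) :=
  forall m i n,
    g (fwith i n.+2 m) = (1 + t) * g (fwith i n.+1 m) - t * g (fwith i n m).

Definition cube_point (d : {ffun 'I_k -> bool}) : 'I_k -> nat := fun i => d i.

Lemma rec_1_t_eq0 g : rec_1_t g -> (forall d, g (cube_point d) = 0) ->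
  forall m, g m = 0.
Proof.
move=> g_rec g_cube m.
have cube m' : (forall i, m' i <= 1)%N -> g m' = 0.
  move=> m'_le1; rewrite -(g_cube [ffun i => m' i == 1%N]).
  congr g; apply: functional_extensionality => i; rewrite /cube_point ffunE.
  by have := m'_le1 i; case: (m' i) => [|[|]].
elim: {m}(\sum_i m i)%N {-2}m (leqnn (\sum_i m i)%N) => [|s IH] m sum_m.
  by apply: cube => i; move: sum_m; rewrite (bigD1 i) //=; lia.
have [/forallP|] := boolP [forall i, m i <= 1]%N; first exact: cube.
rewrite negb_forall => /existsP [i]; rewrite -ltnNge.
case mi: (m i) => [|[|n]] // _.
move: sum_m; rewrite -(fwith_id m i) mi sum_fwith => sum_m.
by rewrite g_rec !IH ?mulr0 ?subr0 // sum_fwith; lia.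
Qed.

(* [t - 1] times the basis of solutions of the one-dimensional recurrence
   dual to evaluation at [0] and [1]. *)
Definition cube_weight (n : nat) (b : bool) : R :=
  if b then t ^+ n - 1 else t - t ^+ n.

Lemma cube_weight_rec n b :
  cube_weight n.+2 b = (1 + t) * cube_weight n.+1 b - t * cube_weight n b.
Proof. by case: b; rewrite /cube_weight !exprS; ring. Qed.

Lemma cube_weight_bool (b b' : bool) :
  cube_weight b b' = if b' == b then t - 1 else 0.
Proof. by case: b; case: b'; rewrite /cube_weight ?expr0 ?expr1 ?subrr. Qed.

Definition cube_coef (eb b : bool) : R := if eb == b then (if b then 1 else t) else -1.

Lemma cube_weightE n b :
  cube_weight n b = \sum_(eb : bool) t ^+ (eb * n) * cube_coef eb b.
Proof. by rewrite big_bool /= mul1n mul0n expr0; case: b; rewrite /cube_weight /cube_coef /=; ring. Qed.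

Lemma rec_1_t_cube_sum (c : {ffun 'I_k -> bool} -> R) :
  rec_1_t (fun m => \sum_(d : {ffun 'I_k -> bool}) (\prod_i cube_weight (m i) (d i)) * c d).
Proof.
move=> m i n; rewrite !mulr_sumr -sumrB; apply: eq_bigr => d _ /=.
rewrite !(prod_fwith _ _ (fun j a => cube_weight a (d j))) cube_weight_rec; ring.
Qed.

Lemma rec_1_t_interpolation g : rec_1_t g -> forall m,
  (t - 1) ^+ k * g m =
  \sum_(d : {ffun 'I_k -> bool}) (\prod_i cube_weight (m i) (d i)) * g (cube_point d).
Proof.
move=> g_rec m; apply/eqP; rewrite -subr_eq0; apply/eqP; move: m.
apply: rec_1_t_eq0 => [m i n|d0].
  have /= -> := rec_1_t_cube_sum (fun d => g (cube_point d)) m i n.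
  rewrite g_rec; ring.
rewrite /cube_point (bigD1 d0) //= [\sum_(d | d != d0) _]big1 ?addr0 => [|d /eqP d_neq].
  under eq_bigr => i _ do rewrite cube_weight_bool eqxx.
  by rewrite prodr_const card_ord subrr.
have [i d_i] : exists i, d i != d0 i.
  apply/existsP; apply: contraT; rewrite negb_exists => /forallP d_eq.
  by case: d_neq; apply/ffunP => i; apply/eqP/negPn/d_eq.
by rewrite (@prodr_eq0_at _ _ _ i) ?mul0r // cube_weight_bool (negbTE d_i).
Qed.

Definition rec_coef g (eps : {ffun 'I_k -> bool}) : R :=
  \sum_(d : {ffun 'I_k -> bool}) (\prod_i cube_coef (eps i) (d i)) * g (cube_point d).

Theorem rec_1_t_expansion g : rec_1_t g -> forall m,
  (t - 1) ^+ k * g m =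
  \sum_(eps : {ffun 'I_k -> bool}) t ^+ (\sum_(i < k) eps i * m i) * rec_coef g eps.
Proof.
move=> g_rec m; rewrite rec_1_t_interpolation //.
have weight_prodE d : \prod_i cube_weight (m i) (d i) =
    \sum_(eps : {ffun 'I_k -> bool}) t ^+ (\sum_(i < k) eps i * m i) *
                                    \prod_i cube_coef (eps i) (d i).
  under eq_bigr => i _ do rewrite cube_weightE.
  rewrite bigA_distr_bigA; apply: eq_bigr => eps _.
  by rewrite big_split /= prodrXr.
under eq_bigr => d _ do rewrite weight_prodE mulr_suml.
rewrite exchange_big; apply: eq_bigr => eps _; rewrite /rec_coef mulr_sumr.
by apply: eq_bigr => d _; rewrite mulrA.
Qed.
End TwoRootRecurrence.

Section EvenPart.
Variable R : comNzRingType.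
Implicit Types p q : {poly R}.

Lemma even_polyMX2 p : even_poly (p * 'X^2) = even_poly p * 'X.
Proof. by rewrite exprS expr1 mulrA even_polyMX odd_polyMX. Qed.

Lemma even_polyM_comp_X2 p q : even_poly ((q \Po 'X^2) * p) = q * even_poly p.
Proof.
rewrite mulrC [RHS]mulrC.
elim/poly_ind: q => [|q c IH]; first by rewrite comp_poly0 !mulr0 raddf0.
rewrite comp_poly_MXaddC mulrDr mulrA even_polyD even_polyMX2 IH.
by rewrite [p * _]mulrC mul_polyC even_polyZ -mul_polyC mulrDr mulrA [_ * c%:P]mulrC.
Qed.
End EvenPart.

Section Reciprocal.
Variable R : comNzRingType.
Implicit Types p q : {poly R}.

(* For [size p <= n.+1], [reciprocal p n] is [y^n p(y + 1/y)]. *)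
Definition reciprocal (p : {poly R}) (n : nat) : {poly R} :=
  \sum_(j < n.+1) p`_j *: ('X^(n - j) * ('X^2 + 1) ^+ j).

Lemma reciprocalB p q n : reciprocal (p - q) n = reciprocal p n - reciprocal q n.
Proof. by rewrite -sumrB; apply: eq_bigr => j _; rewrite coefB scalerBl. Qed.

Lemma reciprocalXM p n : reciprocal ('X * p) n.+1 = ('X^2 + 1) * reciprocal p n.
Proof.
rewrite /reciprocal big_ord_recl coefXM eqxx scale0r add0r mulr_sumr.
apply: eq_bigr => j _; rewrite coefXM /= /bump add1n subSS exprS mulrCA scalerAr //.
Qed.

Lemma reciprocal_addn2 p n : (size p <= n.+1)%N ->
  reciprocal p n.+2 = 'X^2 * reciprocal p n.
Proof.
move=> size_p; rewrite /reciprocal [in LHS]big_ord_recr [in LHS]big_ord_recr /=.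
rewrite !nth_default ?(leq_trans size_p) //.
rewrite !scale0r !addr0 mulr_sumr; apply: eq_bigr => j _.
have -> : (n.+2 - j = 2 + (n - j))%N by have := ltn_ord j; lia.
by rewrite exprD -mulrA scalerAr.
Qed.
End Reciprocal.

Lemma even_poly_def (R : nzRingType) (p : {poly R}) :
  even_poly p = \poly_(i < size p) p`_(2 * i).
Proof.
rewrite (@even_polyE _ (size p)) -?addnn ?leq_addr //.
by apply: eq_poly => i _; rewrite mul2n.
Qed.

Definition char_fmx (V : finType) (r : rel V) (x y : V) : {poly int} :=
  'X *+ (x == y) - (r x y)%:R.

Lemma charpoly_graph_fdet (V : finType) (r : rel V) :
  charpoly_graph r = fdet (char_fmx r).
Proof.
have enum_inj := @enum_val_inj V predT.
rewrite (fdet_inj enum_inj) => [|x y /negP[]]; last first.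
  by rewrite -[x]enum_rankK imset_f.
apply: eq_bigr => s _; congr (_ * _); apply: eq_bigr => a _.
by rewrite !mxE polyC_natr /char_fmx (inj_eq enum_inj).
Qed.

Lemma recip_auxE (V : finType) (r : rel V) :
  recip_aux r = reciprocal (charpoly_graph r) #|V|.
Proof. by rewrite /recip_aux /reciprocal /charpoly_graph size_char_poly. Qed.

Section PathExtension.
Variables (T : finType) (e : rel T) (k : nat) (v : 'I_k -> T).
Local Notation VV m := (@ext_vert T k m).
Local Notation G m := (@ext_rel T e k v m).

Lemma ext_vert_eq m (p q : {i : 'I_k & 'I_(m i)}) :
  (inr p == inr q :> VV m) = (tag p == tag q) && (val (tagged p) == val (tagged q)).
Proof.
case: p q => [i a] [j b] /=; apply/eqP/andP => [|[/eqP ij /eqP ab]].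
  move/(congr1 (fun x : VV m => if x is inr p then (val (tag p), val (tagged p)) else (0, 0)%N)).
  by case=> /val_inj ij ab; split; apply/eqP.
by subst j; congr (inr (existT _ _ _)); apply: val_inj.
Qed.

Lemma card_ext_vert m : #|VV m| = (#|T| + \sum_i m i)%N.
Proof.
rewrite card_sum card_tagged sumnE big_map big_enum /=; congr (_ + _)%N.
by apply: eq_bigr => i _; rewrite card_ord.
Qed.

Section Embedding.
Variables (m' m : 'I_k -> nat) (le_m : forall i, (m' i <= m i)%N).

Definition ext_embed (x : VV m') : VV m :=
  match x with
  | inl t => inl t
  | inr p => inr (Tagged (fun i => 'I_(m i)) (widen_ord (le_m (tag p)) (tagged p)))
  end.

Definition ext_kept (x : VV m) : bool :=
  if x is inr p then (val (tagged p) < m' (tag p))%N else true.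

Lemma ext_embed_inj : injective ext_embed.
Proof.
case=> [t|p] [t'|q] //=; first by case=> ->.
move/eqP; rewrite ext_vert_eq => /andP[tag_eq val_eq].
by apply/eqP; rewrite ext_vert_eq tag_eq.
Qed.

Lemma ext_rel_embed x y : G m (ext_embed x) (ext_embed y) = G m' x y.
Proof. by case: x => [t|[i a]]; case: y => [t'|[j b]]. Qed.

Lemma ext_keptP x : reflect (exists a, x = ext_embed a) (ext_kept x).
Proof.
apply: (iffP idP) => [|[[t|[i a]] ->] //=].
case: x => [t _|[i b] /= lt_b]; first by exists (inl t).
by exists (inr (Tagged (fun i => 'I_(m' i)) (Ordinal lt_b))); apply/eqP; rewrite ext_vert_eq !eqxx.
Qed.

Lemma charpoly_ext_restrict (A : pred (VV m)) : A =1 ext_kept ->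
  fdet (fmx_restrict A (char_fmx (G m))) = charpoly_graph (G m').
Proof.
move=> eqA; rewrite charpoly_graph_fdet (fdet_inj ext_embed_inj) => [|x y x_out].
  apply: eq_fdet => a b; rewrite /fmx_restrict !eqA.
  have kept c : ext_kept (ext_embed c) by apply/ext_keptP; exists c.
  by rewrite !kept /char_fmx (inj_eq ext_embed_inj) ext_rel_embed.
rewrite /fmx_restrict eqA; case: ext_keptP => // -[a x_eq].
by case/negP: x_out; rewrite x_eq imset_f.
Qed.
End Embedding.

Lemma charpoly_ext_rec m i n : m i = n.+2 ->
  charpoly_graph (G m) =
  'X * charpoly_graph (G (fwith i n.+1 m)) - charpoly_graph (G (fwith i n m)).
Proof.
move=> mi.
have lt1 : (n.+1 < m i)%N by rewrite mi.
have lt0 : (n < m i)%N by rewrite mi; lia.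
(* [u] is the end of the i-th path and [w] its neighbour. *)
pose u : VV m := inr (Tagged _ (Ordinal lt1)).
pose w : VV m := inr (Tagged _ (Ordinal lt0)).
have b_lt (b : 'I_(m i)) : (b < n.+2)%N by rewrite -mi.
have kept1 x : ext_kept (fwith i n.+1 m) x = (x != u).
  case: x => [t|[l b]] //=; rewrite ext_vert_eq /=.
  case: eqVneq => [li|] /=; last by rewrite ltn_ord.
  by subst l; have := b_lt b; lia.
have kept0 x : ext_kept (fwith i n m) x = (x != u) && (x != w).
  case: x => [t|[l b]] //=; rewrite !ext_vert_eq /=.
  case: eqVneq => [li|] /=; last by rewrite ltn_ord.
  by subst l; have := b_lt b; lia.
have rel_u x : G m u x = (x == w).
  case: x => [t|[l b]] /=; first by rewrite andbF.
  rewrite ext_vert_eq /= eq_sym; case: eqVneq => [li|] //=.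
  by subst l; have := b_lt b; lia.
have rel_u' x : G m x u = (x == w).
  case: x => [t|[l b]] /=; first by rewrite andbF.
  rewrite ext_vert_eq /=; case: eqVneq => [li|] //=.
  by subst l; have := b_lt b; lia.
have uw : u != w by rewrite ext_vert_eq /=; lia.
have le1 j : (fwith i n.+1 m j <= m j)%N by rewrite /=; case: eqP => [->|] //; lia.
have le0 j : (fwith i n m j <= m j)%N by rewrite /=; case: eqP => [->|] //; lia.
rewrite charpoly_graph_fdet (@fdet_pendant _ _ _ u w uw); first last.
- move=> x xu xw; rewrite /char_fmx rel_u rel_u' (negbTE xw) eq_sym (negbTE xu).
  by rewrite !mulr0n subr0.
- by rewrite /char_fmx rel_u' eqxx eq_sym (negbTE uw) mulr0n sub0r.
- by rewrite /char_fmx rel_u eqxx (negbTE uw) mulr0n sub0r.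
rewrite {1}/char_fmx rel_u eqxx (negbTE uw) mulr1n subr0.
rewrite (charpoly_ext_restrict le1) => [|x]; last by rewrite kept1.
by rewrite (charpoly_ext_restrict le0) => // x; rewrite kept0.
Qed.

Lemma rec_1_t_recip_aux : rec_1_t 'X^2 (fun m => recip_aux (G m)).
Proof.
move=> m i n /=; rewrite !recip_auxE !card_ext_vert !sum_fwith.
rewrite (@charpoly_ext_rec _ i n) /= ?eqxx // !fwith_fwith !addSn !addnS.
rewrite reciprocalB reciprocalXM reciprocal_addn2 1?[1 + _]addrC //.
by rewrite /charpoly_graph size_char_poly card_ext_vert sum_fwith.
Qed.

Lemma bipartite_ext m : bipartite (G m) = bipartite e.
Proof.
apply/existsP/existsP => [[f /forallP f_col]|[f /forallP f_col]].
  exists [ffun x => f (inl x)]; apply/forallP => x; apply/forallP => y.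
  rewrite !ffunE; apply/implyP => exy.
  by move/forallP/(_ (inl y))/implyP: (f_col (inl x)); apply.
(* The j-th vertex of the i-th path gets the colour of v_i iff j is odd. *)
exists [ffun z : VV m => match z with
  | inl x => f x
  | inr p => f (v (tag p)) (+) ~~ odd (tagged p)
  end].
apply/forallP => a; apply/forallP => b; apply/implyP; rewrite !ffunE.
case: a => [x|[i a]]; case: b => [y|[j b]] /=.
- by move=> exy; move/forallP/(_ y)/implyP: (f_col x); apply.
- by case/andP=> /eqP -> /eqP ->; case: (f _).
- by case/andP=> /eqP -> /eqP ->; case: (f _).
- case/andP=> /eqP ij; subst j.
  by case/orP=> /eqP <-; rewrite /= ?negbK; case: (f _); case: (odd _).
Qed.
End PathExtension.

Lemma recip_bipartite (V : finType) (r : rel V) :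
  recip r = if bipartite r then even_poly (recip_aux r) else recip_aux r.
Proof. by rewrite /recip even_poly_def. Qed.

Unset Implicit Arguments.
Theorem lemma11 (T : finType) (e : rel T)
  (e_sym : symmetric e) (e_irr : irreflexive e)
  (k : nat) (v : 'I_k -> T) :
  exists P : {ffun 'I_k -> bool} -> {poly int},
    forall m : 'I_k -> nat, (forall i, (2 <= m i)%N) ->
      let Y : {poly int} := if bipartite e then 'X else 'X^2 in
      (Y - 1) ^+ k * recip (@ext_rel T e k v m) =
      \sum_(eps : {ffun 'I_k -> bool})
         Y ^+ (\sum_(i < k) eps i * m i)%N * P eps.
Proof.
pose P := rec_coef 'X^2 (fun m => recip_aux (@ext_rel T e k v m)).
exists (fun eps => if bipartite e then even_poly (P eps) else P eps) => m _ /=.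
have expand := rec_1_t_expansion (rec_1_t_recip_aux e v) m.
rewrite recip_bipartite bipartite_ext; case: (bipartite e); last exact: expand.
have sub1E : ('X^2 - 1 : {poly int}) ^+ k = ('X - 1) ^+ k \Po 'X^2.
  by rewrite rmorphXn rmorphB /= comp_polyX rmorph1.
move/(congr1 (@even_poly _)): expand; rewrite sub1E even_polyM_comp_X2 => ->.
rewrite raddf_sum /=; apply: eq_bigr => eps _.
have powE : ('X^2 : {poly int}) ^+ (\sum_(i < k) eps i * m i) =
             'X ^+ (\sum_(i < k) eps i * m i) \Po 'X^2.
  by rewrite rmorphXn /= comp_polyX.
by rewrite powE even_polyM_comp_X2.
Qed.
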